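(* Let $\mathbf L=(L_1,\ldots,L_K)$ and $\mathbf L'=(L'_1,\ldots,L'_{K'})$ be weakly decreasing sequences of positive integers with $\mathbf L\preccurlyeq\mathbf L'$. If $\mathbf L'\in\mathrm{TFF}(\alpha,N)$, then $\mathbf L\in\mathrm{TFF}(\alpha,N)$.
   Context: Fix a positive integer $N$. A weakly decreasing sequence of positive integers $(L_1,\ldots,L_K)$ belongs to $\mathrm{TFF}(\alpha,N)$ if there exist orthogonal projections $P_1,\ldots,P_K$ on $\mathbb{R}^N$ with $\operatorname{rank}P_i=L_i$ and $\sum_{i=1}^K P_i=\alpha\mathbf I$ (then necessarily $\alpha=\sum L_i/N$). For weakly decreasing sequences of nonnegative integers, $\mathbf L\preccurlyeq\mathbf L'$ (majorization) means $\sum_{i=1}^K L_i=\sum_{i=1}^{K'}L'_i$ and $\sum_{i=1}^k L_i\le\sum_{i=1}^k L'_i$ for all $k\le\min(K,K')$. *)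

From HB Require Import structures.
From mathcomp Require Import all_boot all_order all_algebra.
From mathcomp Require Import reals.
Set Implicit Arguments. Unset Strict Implicit. Unset Printing Implicit Defensive.
Import Order.TTheory GRing.Theory Num.Theory.
Local Open Scope ring_scope.

Definition orth_proj (R : realType) (N : nat) (P : 'M[R]_N) : Prop :=
  P^T = P /\ P *m P = P.

Definition wdec_pos (L : seq nat) : Prop :=
  sorted geq L /\ all (fun l => 0 < l)%N L.

Definition TFF (R : realType) (alpha : R) (N : nat) (L : seq nat) : Prop :=
  wdec_pos L /\
  exists P : 'I_(size L) -> 'M[R]_N,
    (forall i, orth_proj (P i) /\ \rank (P i) = nth 0%N L i) /\
    \sum_(i < size L) P i = alpha%:M.

Definition majorized (L L' : seq nat) : Prop :=
  sumn L = sumn L' /\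
  forall k, (k <= minn (size L) (size L'))%N ->
    (sumn (take k L) <= sumn (take k L'))%N.

From mathcomp Require Import all_boot all_order all_algebra.
From mathcomp Require Import reals.
From mathcomp Require Import zify.
Set Implicit Arguments. Unset Strict Implicit. Unset Printing Implicit Defensive.
Import GRing.Theory Num.Theory.

(* If rank Q < rank P for orthogonal projections P and Q, then range P meets
   ker Q in a nonzero vector v, and moving the rank-one projection onto v from P
   to Q leaves P + Q unchanged while the ranks become rank P - 1 and rank Q + 1.
   Pad L' with zeros to the length of L.  While L' <> L, let j be the first index
   with L'_j < L_j; majorization gives some i < j with L'_i > L_i, so
   L'_j < L_j <= L_i < L'_i.  Moving one unit from L'_i to L'_j keeps L majorized
   by L', decreases sum_m (L_m - L'_m)^+, and is realized on the projections by
   the transfer above. *)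

Section IdempotentRank.
Variables (F : fieldType) (N : nat).
Local Open Scope ring_scope.
Implicit Types A B P Q : 'M[F]_N.

Lemma mulmx_idem_sub m A (u : 'M_(m, N)) : A *m A = A -> (u <= A)%MS -> u *m A = u.
Proof. by move=> AA /submxP[D ->]; rewrite -mulmxA AA. Qed.

Lemma mxrank_idem_add A B : A *m A = A -> B *m B = B -> A *m B = 0 -> B *m A = 0 ->
  \rank (A + B)%R = (\rank A + \rank B)%N.
Proof.
move=> AA BB AB BA.
have capAB : (A :&: B)%MS = 0.
  set X := (A :&: B)%MS.
  have XA : X *m A = X := mulmx_idem_sub AA (capmxSl A B).
  have XB : X *m B = X := mulmx_idem_sub BB (capmxSr A B).
  by rewrite -XB -XA -mulmxA AB mulmx0.
have AAB : A *m (A + B) = A by rewrite mulmxDr AA AB addr0.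
have BAB : B *m (A + B) = B by rewrite mulmxDr BB BA add0r.
have sub_adds : ((A + B)%MS <= (A + B)%R)%MS.
  rewrite addsmx_sub; apply/andP; split.
    by rewrite -[X in (X <= _)%MS]AAB submxMl.
  by rewrite -[X in (X <= _)%MS]BAB submxMl.
rewrite -(mxrank_disjoint_sum capAB); apply/eqmx_rank.
by apply/andP; split; [apply: addmx_sub_adds | apply: sub_adds].
Qed.

Lemma exists_sub_kermx P Q : (\rank Q < \rank P)%N ->
  exists2 v : 'rV[F]_N, v != 0 & (v <= P)%MS /\ v *m Q = 0.
Proof.
move=> ltQP; set X := (P :&: kermx Q)%MS.
have X_neq0 : X != 0.
  rewrite -mxrank_eq0 -lt0n; have := mxrank_mul_ker P Q; rewrite -/X.
  by have := mxrankM_maxr P Q; lia.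
exists (nz_row X); first by rewrite nz_row_eq0.
split; last by apply/sub_kermxP; rewrite (submx_trans (nz_row_sub X)) ?capmxSr.
by rewrite (submx_trans (nz_row_sub X)) ?capmxSl.
Qed.

End IdempotentRank.

Section RankOneProjection.
Variables (R : realType) (N : nat).
Local Open Scope ring_scope.
Implicit Types (M : 'M[R]_N) (v : 'rV[R]_N).

Lemma dotmx_self_neq0 v : v != 0 -> (v *m v^T) 0 0 != 0.
Proof.
have -> : (v *m v^T) 0 0 = \sum_l v 0 l ^+ 2.
  by rewrite mxE; apply: eq_bigr => l _; rewrite mxE expr2.
apply: contraNneq => /eqP; rewrite psumr_eq0 => [/allP v0|l _]; last exact: sqr_ge0.
apply/eqP/rowP => k; rewrite mxE.
by move: (v0 k (mem_index_enum k)); rewrite sqrf_eq0 => /eqP.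
Qed.

Definition rank_one_proj v : 'M[R]_N := ((v *m v^T) 0 0)^-1 *: (v^T *m v).

Lemma rank_one_projE v : v != 0 -> v *m rank_one_proj v = v.
Proof.
move=> v_neq0; rewrite /rank_one_proj -scalemxAr mulmxA.
set c := (v *m v^T) 0 0; rewrite [v *m v^T]mx11_scalar -/c mul_scalar_mx.
by rewrite scalerA mulVf ?dotmx_self_neq0 ?scale1r.
Qed.

Lemma rank_one_proj_orth v : v != 0 -> orth_proj (rank_one_proj v).
Proof.
move=> v_neq0; split; first by rewrite /rank_one_proj linearZ /= trmx_mul trmxK.
by rewrite {1}/rank_one_proj -scalemxAl -mulmxA rank_one_projE.
Qed.

Lemma mxrank_rank_one_proj v : v != 0 -> \rank (rank_one_proj v) = 1%N.
Proof.
move=> v_neq0; have vE := rank_one_projE v_neq0.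
apply/eqP; rewrite eqn_leq; apply/andP; split.
  by rewrite /rank_one_proj scalemxAl (leq_trans (mxrankM_maxr _ _)) ?rank_leq_row.
rewrite lt0n mxrank_eq0; apply: contraNneq v_neq0 => E0.
by rewrite -vE E0 mulmx0.
Qed.

Lemma sym_mulmx_rank_one_proj M v : M^T = M ->
  M *m rank_one_proj v = ((v *m v^T) 0 0)^-1 *: ((v *m M)^T *m v).
Proof. by move=> MT; rewrite /rank_one_proj -scalemxAr mulmxA trmx_mul MT. Qed.

End RankOneProjection.

Section OrthogonalProjections.
Variables (R : realType) (N : nat).
Local Open Scope ring_scope.
Implicit Types P Q E : 'M[R]_N.

Lemma orth_proj_mulC P E : orth_proj P -> orth_proj E -> E *m P = (P *m E)^T.
Proof. by move=> [PT _] [ET _]; rewrite trmx_mul PT ET. Qed.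

Lemma orth_projD Q E : orth_proj Q -> orth_proj E -> Q *m E = 0 ->
  orth_proj (Q + E) /\ \rank (Q + E)%R = (\rank Q + \rank E)%N.
Proof.
move=> oQ oE QE; have EQ : E *m Q = 0 by rewrite (orth_proj_mulC oQ oE) QE trmx0.
case: oQ oE => [QT QQ] [ET EE]; split; last exact: mxrank_idem_add.
by split; [rewrite linearD /= QT ET | rewrite mulmxDl !mulmxDr QQ QE EQ EE addr0 add0r].
Qed.

Lemma orth_projB P E : orth_proj P -> orth_proj E -> P *m E = E ->
  orth_proj (P - E) /\ (\rank (P - E)%R + \rank E)%N = \rank P.
Proof.
move=> oP oE PE; have EP : E *m P = E by rewrite (orth_proj_mulC oP oE) PE; case: oE.
case: oP oE => [PT PP] [ET EE].
have PEPE : (P - E) *m (P - E) = P - E.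
  by rewrite mulmxBl !mulmxBr PP PE EP EE subrr subr0.
have PEE : (P - E) *m E = 0 by rewrite mulmxBl PE EE subrr.
have EPE : E *m (P - E) = 0 by rewrite mulmxBr EP EE subrr.
split; first by split; rewrite // linearB /= PT ET.
by rewrite -mxrank_idem_add // subrK.
Qed.

Lemma orth_proj_transfer P Q : orth_proj P -> orth_proj Q -> (\rank Q < \rank P)%N ->
  exists P' Q', [/\ orth_proj P', orth_proj Q', (\rank P').+1 = \rank P,
    \rank Q' = (\rank Q).+1 & P' + Q' = P + Q].
Proof.
move=> oP oQ ltQP; have [v v_neq0 [vP vQ]] := exists_sub_kermx ltQP.
have oE := rank_one_proj_orth v_neq0; have rE := mxrank_rank_one_proj v_neq0.
have PE : P *m rank_one_proj v = rank_one_proj v.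
  by rewrite sym_mulmx_rank_one_proj ?(mulmx_idem_sub oP.2 vP) //; case: oP.
have QE : Q *m rank_one_proj v = 0.
  by rewrite sym_mulmx_rank_one_proj ?vQ ?trmx0 ?mul0mx ?scaler0 //; case: oQ.
have [oPE rPE] := orth_projB oP oE PE; have [oQE rQE] := orth_projD oQ oE QE.
exists (P - rank_one_proj v), (Q + rank_one_proj v); split => //.
- by rewrite -rPE rE addn1.
- by rewrite rQE rE addn1.
- by rewrite addrACA addNr addr0.
Qed.

End OrthogonalProjections.

Section Majorization.
Implicit Types f g : nat -> nat.

Definition shift_unit f i j : nat -> nat :=
  fun m => if m == i then (f i).-1 else if m == j then (f j).+1 else f m.

Definition prefix_majorized n g f :=
  (forall k, k <= n -> \sum_(m < k) g m <= \sum_(m < k) f m) /\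
  \sum_(m < n) g m = \sum_(m < n) f m.

Definition deficit n g f := \sum_(m < n) (g m - f m).

Lemma ltn_sum_ord n (F G : 'I_n -> nat) j :
  (forall m, F m <= G m) -> F j < G j -> \sum_m F m < \sum_m G m.
Proof.
move=> FG ltFGj; rewrite (bigD1 j) //= [X in _ < X](bigD1 j) //=.
by rewrite -addSn leq_add // leq_sum.
Qed.

Lemma sum_shift_unit f i j k : i < j -> 0 < f i ->
  \sum_(m < k) shift_unit f i j m + (i < k <= j) = \sum_(m < k) f m.
Proof.
move=> ij fi; elim: k => [|k IH]; first by rewrite !big_ord0.
rewrite !big_ord_recr -IH /shift_unit /=.
by case: ifP => [/eqP->|/negbT/eqP ki]; [|case: ifP => [/eqP->|/negbT/eqP kj]]; lia.
Qed.

Lemma deficit_witness n g f : prefix_majorized n g f -> 0 < deficit n g f ->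
  exists i j, [/\ i < j < n, g i < f i, f j < g j & forall m, m < j -> g m <= f m].
Proof.
move=> [maj_le _]; rewrite lt0n sum_nat_eq0 => /forallPn[j0 /=].
rewrite subn_eq0 -ltnNge => lt_fg0.
have ex_j : exists j, (j < n) && (f j < g j) by exists j0; rewrite ltn_ord lt_fg0.
case: (ex_minnP ex_j) => j /andP[lt_jn lt_fgj] j_min.
have le_gf m : m < j -> g m <= f m.
  move=> lt_mj; rewrite leqNgt; apply/negP => lt_fgm.
  by have := j_min m; rewrite (ltn_trans lt_mj lt_jn) lt_fgm => /(_ isT); lia.
suff [i lt_ij lt_gfi] : exists2 i, i < j & g i < f i by exists i, j; rewrite lt_ij.
have [/existsP[i ?]|/existsPn le_fg] := boolP [exists i : 'I_j, g i < f i].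
  by exists i.
have : \sum_(m < j) f m <= \sum_(m < j) g m.
  by apply: leq_sum => m _; rewrite leqNgt le_fg.
by have := maj_le j.+1 lt_jn; rewrite !big_ord_recr /=; lia.
Qed.

Lemma prefix_majorized_shift n g f i j :
  prefix_majorized n g f -> i < j < n -> g i < f i ->
  (forall m, m < j -> g m <= f m) -> prefix_majorized n g (shift_unit f i j).
Proof.
move=> [maj_le maj_eq] /andP[lt_ij lt_jn] lt_gfi le_gf.
have fi_gt0 : 0 < f i by lia.
split=> [k le_kn|]; last by have := sum_shift_unit n lt_ij fi_gt0; lia.
have := sum_shift_unit k lt_ij fi_gt0.
have [/andP[lt_ik le_kj]|_] := boolP (i < k <= j); last by have := maj_le k le_kn; lia.
have : \sum_(m < k) g m < \sum_(m < k) f m.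
  apply: (ltn_sum_ord (j := Ordinal lt_ik)) => // m.
  by apply: le_gf; apply: leq_trans le_kj.
lia.
Qed.

Lemma deficit_shift n g f i j : j < n -> i != j -> g i < f i -> f j < g j ->
  deficit n g (shift_unit f i j) < deficit n g f.
Proof.
move=> lt_jn neq_ij lt_gfi lt_fgj.
apply: (ltn_sum_ord (j := Ordinal lt_jn)) => [m|]; rewrite /shift_unit /=.
  by case: ifP => [/eqP->|_]; [|case: ifP => [/eqP->|_]]; lia.
by rewrite eq_sym (negbTE neq_ij) eqxx; lia.
Qed.

Lemma deficit0_eq n g f : prefix_majorized n g f -> deficit n g f = 0 ->
  forall m, m < n -> f m = g m.
Proof.
move=> [_ maj_eq] /eqP; rewrite sum_nat_eq0 => /forallP le_gf.
have {}le_gf (m : 'I_n) : g m <= f m by rewrite -subn_eq0; apply: le_gf.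
have : \sum_(m < n) (f m - g m) == 0 by rewrite sumnB // maj_eq subnn.
rewrite sum_nat_eq0 => /forallP ge_gf m mn.
by move: (ge_gf (Ordinal mn)) (le_gf (Ordinal mn)) => /= /eqP; lia.
Qed.

End Majorization.

Section TightFusionFrames.
Variables (R : realType) (N : nat) (alpha : R).
Local Open Scope ring_scope.

Definition tight_fusion_frame n (r : nat -> nat) :=
  exists P : 'I_n -> 'M[R]_N,
    (forall i, orth_proj (P i) /\ \rank (P i) = r i) /\ \sum_(i < n) P i = alpha%:M.

Lemma eq_tight_fusion_frame n r s : (forall i, (i < n)%N -> r i = s i) ->
  tight_fusion_frame n r -> tight_fusion_frame n s.
Proof. by move=> rs [P [oP sumP]]; exists P; split=> // i; rewrite -rs. Qed.

Lemma tight_fusion_frame_widen (s : seq nat) m : (size s <= m)%N ->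
  tight_fusion_frame (size s) (nth 0 s) -> tight_fusion_frame m (nth 0 s).
Proof.
move=> le_sm [P [oP sumP]].
pose Q k := if insub k is Some i then P i else 0.
exists (fun k : 'I_m => Q k); split.
  move=> k; rewrite /Q; case: insubP => [i _ <-|]; first exact: oP.
  rewrite -leqNgt => le_sk; rewrite nth_default // mxrank0.
  by split=> //; split; rewrite ?trmx0 ?mul0mx.
rewrite -sumP [RHS](eq_bigr (fun i : 'I_(size s) => Q i)) => [|i _]; last first.
  by rewrite /Q valK.
rewrite (big_ord_widen _ Q le_sm) [RHS]big_mkcond; apply: eq_bigr => k _.
by rewrite /Q; case: insubP => [i -> _|/negbTE ->].
Qed.

Lemma tight_fusion_frame_shift n r i j : (i < n)%N -> (j < n)%N -> (r j < r i)%N ->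
  tight_fusion_frame n r -> tight_fusion_frame n (shift_unit r i j).
Proof.
move=> lt_in lt_jn lt_rji [P [oP sumP]].
pose oi := Ordinal lt_in; pose oj := Ordinal lt_jn.
have [[oPi rPi] [oPj rPj]] := (oP oi, oP oj).
have [Pi [Pj [oPi' oPj' rPi' rPj' sumPij]]] :
    exists Pi Pj, [/\ orth_proj Pi, orth_proj Pj, (\rank Pi).+1 = r i,
      \rank Pj = (r j).+1 & Pi + Pj = P oi + P oj].
  by rewrite -rPi -rPj; apply: orth_proj_transfer; rewrite ?rPi ?rPj.
have neq_ji : j != i by apply: contraTneq lt_rji => ->; rewrite ltnn.
exists (fun k => if val k == i then Pi else if val k == j then Pj else P k); split.
  move=> k; rewrite /shift_unit; case: ifP => [_|_]; first by rewrite -rPi'.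
  by case: ifP => [_|_]; [rewrite rPj' | apply: oP].
rewrite -sumP (bigD1 oi) //= (bigD1 oj) //=.
rewrite [in RHS](bigD1 oi) //= [in RHS](bigD1 oj) //=.
rewrite eqxx (negbTE neq_ji) eqxx !addrA sumPij; congr (_ + _).
by apply: eq_bigr => k /andP[ki kj]; rewrite !ifN.
Qed.

Lemma tight_fusion_frame_majorized n g f :
  (forall a b, (a <= b < n)%N -> (g b <= g a)%N) -> prefix_majorized n g f ->
  tight_fusion_frame n f -> tight_fusion_frame n g.
Proof.
move=> g_noninc; have [d] := ubnP (deficit n g f); elim: d f => // d IH f.
rewrite ltnS => le_def maj frame_f.
have [def0|def_gt0] := posnP (deficit n g f).
  exact: eq_tight_fusion_frame (deficit0_eq maj def0) frame_f.
have [i [j [/andP[lt_ij lt_jn] lt_gfi lt_fgj le_gf]]] :=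
  deficit_witness maj def_gt0.
have lt_fji : (f j < f i)%N by have := g_noninc i j; lia.
apply: (IH (shift_unit f i j)).
- exact: leq_trans (deficit_shift lt_jn (negbT (ltn_eqF lt_ij)) lt_gfi lt_fgj) le_def.
- by apply: prefix_majorized_shift; rewrite ?lt_ij.
- exact: tight_fusion_frame_shift (ltn_trans lt_ij lt_jn) lt_jn lt_fji frame_f.
Qed.

End TightFusionFrames.

Lemma sum_nth_take (s : seq nat) k : \sum_(m < k) nth 0 s m = sumn (take k s).
Proof.
elim: s k => [|x s IH] [|k] /=; rewrite ?big_ord0 //.
  by rewrite big1 // => m _; rewrite nth_nil.
by rewrite big_ord_recl /= IH.
Qed.

Lemma majorized_size (L L' : seq nat) :
  all (fun l => 0 < l) L' -> majorized L L' -> size L' <= size L.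
Proof.
move=> pos [sum_eq prefix]; rewrite leqNgt; apply/negP => lt_size.
have := prefix (size L); rewrite leq_min leqnn (ltnW lt_size) => /(_ isT).
rewrite take_size sum_eq.
rewrite -{1}(cat_take_drop (size L) L') sumn_cat (drop_nth 0 lt_size) /=.
by have := all_nthP 0 pos (size L) lt_size; lia.
Qed.

Lemma prefix_majorized_nth (L L' : seq nat) : majorized L L' -> size L' <= size L ->
  prefix_majorized (size L) (nth 0 L) (nth 0 L').
Proof.
move=> [sum_eq prefix] le_size; split=> [k le_k|]; rewrite !sum_nth_take; last first.
  by rewrite take_size take_oversize.
have [le_k'|lt_k'] := leqP k (size L'); first by rewrite prefix // leq_min le_k.
rewrite (take_oversize (ltnW lt_k')) -sum_eq.
by rewrite -{2}(cat_take_drop k L) sumn_cat leq_addr.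
Qed.

Lemma sorted_geq_nth (L : seq nat) : sorted geq L ->
  forall a b, a <= b < size L -> nth 0 L b <= nth 0 L a.
Proof.
move=> sorted_L a b /andP[le_ab lt_b].
apply: (sorted_leq_nth (fun _ _ _ h1 h2 => leq_trans h2 h1) leqnn 0 sorted_L) => //.
by rewrite inE (leq_ltn_trans le_ab).
Qed.

Local Open Scope ring_scope.

Theorem theorem2p3 (R : realType) (N : nat) (alpha : R) (L L' : seq nat) :
  (0 < N)%N ->
  wdec_pos L -> wdec_pos L' ->
  majorized L L' ->
  TFF alpha N L' -> TFF alpha N L.
Proof.
move=> _ wL [_ pos_L'] majLL' [_ frame_L']; split=> //.
have le_size := majorized_size pos_L' majLL'.
apply: tight_fusion_frame_majorized (sorted_geq_nth wL.1) _ _.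
  exact: prefix_majorized_nth majLL' le_size.
exact: tight_fusion_frame_widen le_size frame_L'.
Qed.
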